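(* Let $\{J_m(z)\}_{m\geq 0}$ be the sequence generated by $\sum_{m=0}^{\infty}J_m(z)t^m=\frac{1}{1+t+zt^3}$. For $\theta\in(2\pi/3,\pi)$ define \[ r=r(\theta)=\frac{1-4\cos^2\theta}{2\cos\theta},\quad q=q(\theta)=-2\cos\theta,\quad z=z(\theta)=-\frac{1}{r(\theta)^3q(\theta)}, \] \[ t_1=r(\theta)e^{i\theta},\quad t_2=r(\theta)e^{-i\theta},\quad t_3=r(\theta)q(\theta). \] Then for each $\theta\in(2\pi/3,\pi)$ and each $m\geq 0$, \[ J_m(z(\theta))=\frac{q^{m+1}\big[(-2\cos\theta)\sin((m+1)\theta)-\sin((m+2)\theta)\big]+\sin\theta}{z(t_1-t_2)(t_2-t_3)(t_3-t_1)\,t_1^{m+1}t_2^{m+1}t_3^{m+1}}\cdot 2i\, r^{2m+3}. \]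
   Context: A sequence $\{J_m(z)\}$ is generated by $f(t,z)$ if, for each $z\in\mathbb{C}$, $f(t,z)$ is analytic in $t$ in a neighborhood of $t=0$ and $J_m(z)$ is the coefficient of $t^m$ in the power series expansion of $f(t,z)$ in $t$ about $0$. *)

From Stdlib Require Import Reals.
From Coquelicot Require Export Coquelicot.
Open Scope R_scope.

Definition generated_by (f : C -> C -> C) (J : nat -> C -> C) : Prop :=
  forall z : C, exists eps : R, 0 < eps /\
    forall t : C, Cmod t < eps ->
      is_series (fun m : nat => (J m z * Cpow t m)%C) (f t z).

Definition rth (th : R) : R := (1 - 4 * cos th ^ 2) / (2 * cos th).
Definition qth (th : R) : R := - 2 * cos th.
Definition zth (th : R) : C := RtoC (- / (rth th ^ 3 * qth th)).
Definition t1 (th : R) : C := (RtoC (rth th) * (cos th, sin th))%C.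
Definition t2 (th : R) : C := (RtoC (rth th) * (cos th, (- sin th)%R))%C.
Definition t3 (th : R) : C := RtoC (rth th * qth th).

(* Since z = z(th) is real, restricting t to real values splits the complex
   series sum J_m(z) t^m into two real power series, with sums 1/(1+t+zt^3)
   and 0.  Uniqueness of power series coefficients then says that Re J_m(z)
   and Im J_m(z) solve the recurrence x_n + x_(n-1) + z x_(n-3) = [n = 0]
   and 0 respectively, which determines them.

   Put q = -2 cos th and s_k = sin (k th), so s_(k+2) = -q s_(k+1) - s_k,
   r q = q^2 - 1 and z = -q^2/(q^2-1)^3.  The numerator
   N_m = q^(m+1) (q s_(m+1) - s_(m+2)) + s_1 satisfies
   N_(m+3) + (q^2-1) N_(m+2) - q^2 N_m = 0, because
   q x^3 + (q^2-1) x^2 - 1 = (x^2 + q x + 1)(q x - 1); hence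
   N_m / (N_0 (q^2-1)^m) solves the first recurrence.  Finally t1, t2 = r e^(+-i th)
   have sum -r q and product r^2, which reduces the right-hand side to exactly
   this quotient. *)

From Stdlib Require Import Reals Lra Lia.
From Coquelicot Require Import Coquelicot.
Open Scope R_scope.

Definition PS_const (k : R) (n : nat) : R := match n with O => k | S _ => 0 end.

Lemma CV_radius_gt_0_locally (a : nat -> R) :
  locally 0 (ex_pseries a) -> Rbar_lt 0 (CV_radius a).
Proof.
  intros [eps Ha].
  set (x := eps / 2).
  assert (Hx : 0 < x) by (unfold x; destruct eps; simpl; lra).
  destruct (Rbar_lt_le_dec (CV_radius a) (Rabs x)) as [Hout | Hin].
  - exfalso. apply (CV_disk_outside a x Hout), ex_series_lim_0.
    destruct (Ha x) as [l Hl].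
    { change (Rabs (x - 0) < eps). rewrite Rminus_0_r, Rabs_pos_eq by lra.
      unfold x; destruct eps; simpl; lra. }
    exists l. now apply is_pseries_R.
  - eapply Rbar_lt_le_trans; [| exact Hin]. simpl. rewrite Rabs_pos_eq; lra.
Qed.

Lemma is_pseries_const_coef (a : nat -> R) (k : R) :
  locally 0 (fun t => is_pseries a t k) -> forall n, a n = PS_const k n.
Proof.
  intros Hk n.
  assert (Hrad : Rbar_lt 0 (CV_radius a)).
  { apply CV_radius_gt_0_locally. apply (filter_imp _ _ (fun t H => ex_intro _ k H) Hk). }
  pose proof (Derive_n_coef a n Hrad) as Hcoef.
  rewrite (Derive_n_ext_loc _ (fun _ => k)) in Hcoef.
  2: { apply (filter_imp _ _ (fun t H => is_pseries_unique a t k H) Hk). }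
  pose proof (INR_fact_neq_0 n) as Hfact.
  destruct n as [|n].
  - simpl in *. lra.
  - rewrite Derive_n_const in Hcoef.
    destruct (Rmult_integral _ _ (eq_sym Hcoef)); [assumption | contradiction].
Qed.

Lemma is_series_Re (a : nat -> C) (l : C) :
  is_series a l -> is_series (fun n => Re (a n)) (Re l).
Proof.
  intros Ha. apply filterlim_ext with (fun n => Re (sum_n a n)).
  - induction x as [|n IH]; [rewrite !sum_O | rewrite !sum_Sn, <- IH]; reflexivity.
  - eapply filterlim_comp; [exact Ha |].
    intros P [eps HP]. exists eps. intros y [Hy _]. exact (HP _ Hy).
Qed.

Lemma is_series_Im (a : nat -> C) (l : C) :
  is_series a l -> is_series (fun n => Im (a n)) (Im l).
Proof.
  intros Ha. apply filterlim_ext with (fun n => Im (sum_n a n)).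
  - induction x as [|n IH]; [rewrite !sum_O | rewrite !sum_Sn, <- IH]; reflexivity.
  - eapply filterlim_comp; [exact Ha |].
    intros P [eps HP]. exists eps. intros y [_ Hy]. exact (HP _ Hy).
Qed.

Lemma is_pseries_Re_Im (a : nat -> C) (t : R) (l : C) :
  is_series (fun n => a n * Cpow (RtoC t) n)%C l ->
  is_pseries (fun n => Re (a n)) t (Re l) /\ is_pseries (fun n => Im (a n)) t (Im l).
Proof.
  intros Ha. rewrite !is_pseries_R.
  split.
  - apply is_series_ext with (fun n => Re (a n * Cpow (RtoC t) n)%C); [| now apply is_series_Re].
    intros n. rewrite <- RtoC_pow. unfold Re, Im; simpl. ring.
  - apply is_series_ext with (fun n => Im (a n * Cpow (RtoC t) n)%C); [| now apply is_series_Im].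
    intros n. rewrite <- RtoC_pow. unfold Re, Im; simpl. ring.
Qed.

Definition PS_mul_cubic (w : R) (x : nat -> R) (n : nat) : R :=
  x n + PS_incr_1 x n + w * PS_incr_n x 3 n.

Lemma is_pseries_mul_cubic (w : R) (x : nat -> R) (t l : R) :
  is_pseries x t l -> is_pseries (PS_mul_cubic w x) t ((1 + t + w * t ^ 3) * l).
Proof.
  intros Hx.
  apply is_pseries_ext with (PS_plus (PS_plus x (PS_incr_1 x)) (PS_scal w (PS_incr_n x 3))).
  { intros n. reflexivity. }
  replace ((1 + t + w * t ^ 3) * l)
    with (plus (plus l (scal t l)) (scal w (scal (pow_n t 3) l))).
  2: { unfold plus, scal; simpl. unfold mult, one; simpl. ring. }
  apply (is_pseries_plus (K := R_AbsRing) (V := R_NormedModule)).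
  - apply (is_pseries_plus (K := R_AbsRing) (V := R_NormedModule)); [exact Hx |].
    now apply (is_pseries_incr_1 (K := R_AbsRing) (V := R_NormedModule)).
  - apply (is_pseries_scal (K := R_AbsRing) (V := R_NormedModule)); [apply Rmult_comm |].
    now apply (is_pseries_incr_n (K := R_AbsRing) (V := R_NormedModule)).
Qed.

Lemma PS_mul_cubic_zero (w : R) (n : nat) : PS_mul_cubic w (fun _ => 0) n = PS_const 0 n.
Proof. unfold PS_mul_cubic. destruct n as [|[|[|n]]]; simpl; unfold zero; simpl; ring. Qed.

Lemma PS_mul_cubic_inj (w : R) (x y : nat -> R) :
  (forall n, PS_mul_cubic w x n = PS_mul_cubic w y n) -> forall n, x n = y n.
Proof.
  intros Hxy.
  assert (Hxy3 : forall n, x n = y n /\ x (S n) = y (S n) /\ x (S (S n)) = y (S (S n))).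
  { induction n as [|n (IH0 & IH1 & IH2)].
    - pose proof (Hxy 0%nat) as H0. pose proof (Hxy 1%nat) as H1. pose proof (Hxy 2%nat) as H2.
      unfold PS_mul_cubic in *; simpl in *. repeat split; lra.
    - pose proof (Hxy (S (S (S n)))) as H3. unfold PS_mul_cubic in H3; simpl in H3.
      repeat split; try assumption. rewrite IH0, IH2 in H3. lra. }
  intros n. apply Hxy3.
Qed.

Lemma locally_cubic_neq_0 (w : R) : locally 0 (fun t => 1 + t + w * t ^ 3 <> 0).
Proof.
  assert (Hcont : continuous (fun t => 1 + t + w * t ^ 3) 0).
  { apply (ex_derive_continuous (K := R_AbsRing) (V := R_NormedModule)). auto_derive. exact I. }
  apply (Hcont (fun y => y <> 0)).
  exists (mkposreal _ Rlt_0_1). intros y Hy.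
  change (Rabs (y - (1 + 0 + w * 0 ^ 3)) < 1) in Hy.
  apply Rabs_def2 in Hy. simpl in Hy. lra.
Qed.

Lemma generated_by_cubic_recurrence (J : nat -> C -> C) (w : R) :
  generated_by (fun t z => (/ (1 + t + z * Cpow t 3))%C) J ->
  forall n, PS_mul_cubic w (fun m => Re (J m (RtoC w))) n = PS_const 1 n
         /\ PS_mul_cubic w (fun m => Im (J m (RtoC w))) n = PS_const 0 n.
Proof.
  intros HJ n. destruct (HJ (RtoC w)) as [eps [Heps Hser]].
  assert (Hnear : locally 0 (fun t => Rabs t < eps /\ 1 + t + w * t ^ 3 <> 0)).
  { apply filter_and; [| apply locally_cubic_neq_0].
    exists (mkposreal _ Heps). intros t Ht.
    change (Rabs (t - 0) < eps) in Ht. now rewrite Rminus_0_r in Ht. }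
  assert (Hparts : locally 0 (fun t =>
       is_pseries (PS_mul_cubic w (fun m => Re (J m (RtoC w)))) t 1
    /\ is_pseries (PS_mul_cubic w (fun m => Im (J m (RtoC w)))) t 0)).
  { refine (filter_imp _ _ _ Hnear). intros t [Ht Hnz].
    assert (Hf : is_series (fun m => J m (RtoC w) * Cpow (RtoC t) m)%C
                   (RtoC (/ (1 + t + w * t ^ 3)))).
    { rewrite RtoC_inv, !RtoC_plus, RtoC_mult, RtoC_pow by exact Hnz.
      apply Hser. now rewrite Cmod_R. }
    destruct (is_pseries_Re_Im _ _ _ Hf) as [Hre Him]. simpl in Hre, Him.
    split.
    - replace 1 with ((1 + t + w * t ^ 3) * / (1 + t + w * t ^ 3)) by now field.
      now apply is_pseries_mul_cubic.
    - replace 0 with ((1 + t + w * t ^ 3) * 0) by ring.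
      now apply is_pseries_mul_cubic. }
  split; apply is_pseries_const_coef; refine (filter_imp _ _ _ Hparts); tauto.
Qed.
Section ClosedForm.

Variables (q : R) (s : nat -> R).
Hypothesis s_0 : s O = 0.
Hypothesis s_rec : forall k, s (S (S k)) = - q * s (S k) - s k.

Definition closed_form_num (m : nat) : R :=
  q ^ (m + 1) * (q * s (m + 1)%nat - s (m + 2)%nat) + s 1%nat.

Definition closed_form (m : nat) : R :=
  closed_form_num m / (closed_form_num 0 * (q ^ 2 - 1) ^ m).

Lemma closed_form_num_0 : closed_form_num 0 = (1 + 2 * q ^ 2) * s 1%nat.
Proof. unfold closed_form_num; simpl. rewrite s_rec, s_0. ring. Qed.

Lemma closed_form_num_1 : closed_form_num 1 = - (q ^ 2 - 1) * closed_form_num 0.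
Proof. unfold closed_form_num; simpl. rewrite !s_rec, s_0. ring. Qed.

Lemma closed_form_num_2 : closed_form_num 2 = (q ^ 2 - 1) ^ 2 * closed_form_num 0.
Proof. unfold closed_form_num; simpl. rewrite !s_rec, s_0. ring. Qed.

Lemma closed_form_num_rec_solve (n : nat) :
  closed_form_num (S (S (S n)))
  = q ^ 2 * closed_form_num n - (q ^ 2 - 1) * closed_form_num (S (S n)).
Proof.
  unfold closed_form_num. rewrite !Nat.add_succ_r, !Nat.add_0_r, !s_rec. simpl. ring.
Qed.

Lemma closed_form_recurrence (n : nat) :
  closed_form_num 0 <> 0 -> q ^ 2 - 1 <> 0 ->
  PS_mul_cubic (- q ^ 2 / (q ^ 2 - 1) ^ 3) closed_form n = PS_const 1 n.
Proof.
  intros Hnum0 Hq.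
  assert (Hq' : q * q - 1 <> 0) by (replace (q * q) with (q ^ 2) by ring; exact Hq).
  destruct n as [|[|[|n]]]; unfold PS_mul_cubic; simpl; unfold zero, closed_form;
    [| rewrite closed_form_num_1 | rewrite closed_form_num_2, closed_form_num_1
     | rewrite (closed_form_num_rec_solve n)];
    simpl; field; repeat split; auto using pow_nonzero.
Qed.

End ClosedForm.

Lemma Cdiv_mul_Ci (a b c : R) : b <> 0 ->
  (RtoC a / (RtoC b * Ci) * (RtoC 2 * Ci) * RtoC c)%C = RtoC (2 * a * c / b).
Proof.
  intros Hb. apply injective_projections; simpl; field; auto.
Qed.

Lemma sin_mul_rec (th : R) (k : nat) :
  sin (INR (S (S k)) * th) = - qth th * sin (INR (S k) * th) - sin (INR k * th).
Proof.
  unfold qth. rewrite !S_INR.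
  replace ((INR k + 1 + 1) * th) with ((INR k + 1) * th + th) by ring.
  replace (INR k * th) with ((INR k + 1) * th - th) by ring.
  rewrite sin_plus, sin_minus. ring.
Qed.

Lemma sin_mul_0 (th : R) : sin (INR 0 * th) = 0.
Proof. simpl. rewrite Rmult_0_l. apply sin_0. Qed.

Section Roots.

Variable th : R.
Hypothesis cos_neq_0 : cos th <> 0.
Hypothesis qth_sqr_neq_1 : qth th ^ 2 - 1 <> 0.
Hypothesis sin_neq_0 : sin th <> 0.

Lemma rth_mul_qth : rth th * qth th = qth th ^ 2 - 1.
Proof. unfold rth, qth. field. exact cos_neq_0. Qed.

Lemma qth_neq_0 : qth th <> 0.
Proof. unfold qth. contradict cos_neq_0. lra. Qed.

Lemma rth_neq_0 : rth th <> 0.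
Proof.
  intros Hr. apply qth_sqr_neq_1. rewrite <- rth_mul_qth, Hr. ring.
Qed.

Lemma zth_eq : zth th = RtoC (- qth th ^ 2 / (qth th ^ 2 - 1) ^ 3).
Proof.
  unfold zth. f_equal. rewrite <- rth_mul_qth.
  pose proof qth_neq_0. pose proof rth_neq_0. field. auto.
Qed.

Lemma t1_add_t2 : (t1 th + t2 th)%C = RtoC (- rth th * qth th).
Proof. unfold t1, t2, qth. apply injective_projections; simpl; ring. Qed.

Lemma t1_mul_t2 : (t1 th * t2 th)%C = RtoC (rth th ^ 2).
Proof.
  unfold t1, t2. pose proof (sin2_cos2 th) as Hpyth. unfold Rsqr in Hpyth.
  apply injective_projections; simpl; nra.
Qed.

Lemma t1_sub_t2 : (t1 th - t2 th)%C = (RtoC (2 * rth th * sin th) * Ci)%C.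
Proof. unfold t1, t2. apply injective_projections; simpl; ring. Qed.

Lemma t_vandermonde :
  ((t1 th - t2 th) * (t2 th - t3 th) * (t3 th - t1 th))%C
  = (RtoC (- 2 * rth th ^ 3 * sin th * (1 + 2 * qth th ^ 2)) * Ci)%C.
Proof.
  transitivity ((t1 th - t2 th)
                * - (t3 th * t3 th - (t1 th + t2 th) * t3 th + t1 th * t2 th))%C.
  { ring. }
  rewrite t1_add_t2, t1_mul_t2, t1_sub_t2. unfold t3.
  apply injective_projections; simpl; ring.
Qed.

Lemma rhs_denominator (m : nat) :
  (zth th * (t1 th - t2 th) * (t2 th - t3 th) * (t3 th - t1 th)
   * Cpow (t1 th) (m + 1) * Cpow (t2 th) (m + 1) * Cpow (t3 th) (m + 1))%C
  = (RtoC (2 * sin th * (1 + 2 * qth th ^ 2) / qth th * (rth th ^ 3 * qth th) ^ (m + 1)) * Ci)%C.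
Proof.
  transitivity (zth th * ((t1 th - t2 th) * (t2 th - t3 th) * (t3 th - t1 th))
                * Cpow (t1 th * t2 th * t3 th) (m + 1))%C.
  { rewrite !Cpow_mult_l. ring. }
  rewrite t_vandermonde, t1_mul_t2. unfold t3.
  rewrite <- RtoC_mult.
  replace (rth th ^ 2 * (rth th * qth th)) with (rth th ^ 3 * qth th) by ring.
  rewrite <- RtoC_pow. unfold zth.
  pose proof qth_neq_0. pose proof rth_neq_0.
  apply injective_projections; simpl; field; auto.
Qed.

Lemma rhs_closed_form (m : nat) :
  ((RtoC (qth th ^ (m + 1) * ((- 2 * cos th) * sin (INR (m + 1) * th)
                               - sin (INR (m + 2) * th)) + sin th)
    / (zth th * (t1 th - t2 th) * (t2 th - t3 th) * (t3 th - t1 th)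
       * Cpow (t1 th) (m + 1) * Cpow (t2 th) (m + 1) * Cpow (t3 th) (m + 1)))
   * (RtoC 2 * Ci) * RtoC (rth th ^ (2 * m + 3)))%C
  = RtoC (closed_form (qth th) (fun k => sin (INR k * th)) m).
Proof.
  pose proof qth_neq_0 as Hq. pose proof rth_neq_0 as Hr.
  assert (Hsin1 : sin (INR 1 * th) = sin th) by (simpl; now rewrite Rmult_1_l).
  assert (Hq2 : 1 + 2 * qth th ^ 2 <> 0) by (pose proof (pow2_ge_0 (qth th)); lra).
  assert (Hden : 2 * sin th * (1 + 2 * qth th ^ 2) / qth th
                 * (rth th ^ 3 * qth th) ^ (m + 1) <> 0).
  { unfold Rdiv. repeat apply Rmult_integral_contrapositive_currified;
      auto using pow_nonzero, Rinv_neq_0_compat, Rmult_integral_contrapositive_currified;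
      lra. }
  rewrite rhs_denominator, Cdiv_mul_Ci by exact Hden.
  f_equal. unfold closed_form.
  rewrite (closed_form_num_0 _ _ (sin_mul_0 th) (sin_mul_rec th)), Hsin1, <- rth_mul_qth.
  unfold closed_form_num. rewrite Hsin1. fold (qth th).
  replace (2 * m + 3)%nat with (m + m + 3)%nat by lia.
  rewrite !Rpow_mult_distr, !pow_add, <- !pow_mult, (Nat.mul_comm 3 m), !pow_mult.
  field. repeat split; auto using pow_nonzero.
Qed.

End Roots.

Lemma cos_between (th : R) : 2 * PI / 3 < th < PI -> -1 < cos th < -1/2.
Proof.
  intros Hth. pose proof PI_RGT_0. split.
  - rewrite <- cos_PI. apply cos_decreasing_1; lra.
  - replace (-1/2) with (cos (2 * PI / 3)).
    + apply cos_decreasing_1; lra.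
    + replace (2 * PI / 3) with (PI - PI / 3) by field.
      rewrite cos_minus, cos_PI, sin_PI, cos_PI3. lra.
Qed.

Theorem mainTheorem17 (J : nat -> C -> C) :
  generated_by (fun t z => (/ (1 + t + z * Cpow t 3))%C) J ->
  forall (th : R), 2 * PI / 3 < th < PI ->
  forall m : nat,
    J m (zth th) =
    ((RtoC (qth th ^ (m + 1) * ((- 2 * cos th) * sin (INR (m + 1) * th)
                                 - sin (INR (m + 2) * th)) + sin th)
      / (zth th * (t1 th - t2 th) * (t2 th - t3 th) * (t3 th - t1 th)
         * Cpow (t1 th) (m + 1) * Cpow (t2 th) (m + 1) * Cpow (t3 th) (m + 1)))
     * (RtoC 2 * Ci) * RtoC (rth th ^ (2 * m + 3)))%C.
Proof.
  intros HJ th Hth m.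
  pose proof (cos_between th Hth) as Hcos.
  assert (Hsin : sin th <> 0) by (apply Rgt_not_eq, sin_gt_0; pose proof PI_RGT_0; lra).
  assert (Hq : qth th ^ 2 - 1 <> 0) by (unfold qth; nra).
  set (s k := sin (INR k * th)).
  assert (Hnum0 : closed_form_num (qth th) s 0 <> 0).
  { rewrite (closed_form_num_0 _ s (sin_mul_0 th) (sin_mul_rec th)).
    apply Rmult_integral_contrapositive; split; [nra |]. unfold s. simpl. now rewrite Rmult_1_l. }
  rewrite rhs_closed_form, zth_eq by (auto; lra).
  set (w := - qth th ^ 2 / (qth th ^ 2 - 1) ^ 3).
  pose proof (generated_by_cubic_recurrence J w HJ) as Hrec.
  apply injective_projections.
  - apply (PS_mul_cubic_inj w (fun n => Re (J n (RtoC w))) (closed_form (qth th) s)).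
    intros n. rewrite (proj1 (Hrec n)). symmetry.
    apply (closed_form_recurrence _ s (sin_mul_0 th) (sin_mul_rec th)); assumption.
  - apply (PS_mul_cubic_inj w (fun n => Im (J n (RtoC w))) (fun _ => 0)).
    intros n. now rewrite (proj2 (Hrec n)), PS_mul_cubic_zero.
Qed.
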